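(* In generalized non-signalling theory (box world), consider a system of boxes each of which has at least two possible outputs. Let $(\mathbf{a}_1,\mathbf{x}_1)$ and $(\mathbf{a}_2,\mathbf{x}_2)$ be output-input pairs of the system such that it is not the case that both $\mathbf{a}_1=\mathbf{a}_2$ and $\mathbf{x}_1=\mathbf{x}_2$. Then there exists an allowed state $\mathbf{p}$ with $p(\mathbf{a}_1|\mathbf{x}_1)=0$ and $p(\mathbf{a}_2|\mathbf{x}_2)>0$.
   Context: Box world (GNST): a box has a finite set of inputs and outputs. A system of $n$ boxes has as allowed states all collections $p(\mathbf{a}|\mathbf{x})=p(a_1,\ldots,a_n|x_1,\ldots,x_n)\ge0$ that are normalized ($\sum_{\mathbf{a}}p(\mathbf{a}|\mathbf{x})=1$ for all $\mathbf{x}$) and no-signalling (for each $i$, $\sum_{a_i}p(\mathbf{a}|\mathbf{x})$ is independent of $x_i$). An output-input pair is a pair $(\mathbf{a},\mathbf{x})$ of an output tuple and an input tuple. *)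

From HB Require Import structures.
From mathcomp Require Import all_boot all_order all_algebra.
Set Implicit Arguments. Unset Strict Implicit. Unset Printing Implicit Defensive.
Import Order.TTheory GRing.Theory Num.Theory.
Local Open Scope ring_scope.

(* A system of n boxes: box i has finite output set A i and input set X i.
   Output tuples are {dffun forall i, A i}, input tuples {dffun forall i, X i}. *)
Section Box.
Variables (R : realFieldType) (n : nat) (A X : 'I_n -> finType).

Definition outs := {dffun forall i : 'I_n, A i}.
Definition ins := {dffun forall i : 'I_n, X i}.

(* p(a | x) is represented as p a x *)
Definition nonneg_state (p : outs -> ins -> R) : Prop :=
  forall a x, 0 <= p a x.

Definition normalized (p : outs -> ins -> R) : Prop :=
  forall x, \sum_(a : outs) p a x = 1.

(* No-signalling: for each i, the marginal sum_{a_i} p(a|x) (a function of the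
   other outputs a_{-i} and of x) does not depend on x_i. *)
Definition no_signalling (p : outs -> ins -> R) : Prop :=
  forall (i : 'I_n) (x x' : ins),
    (forall j, j != i -> x j = x' j) ->
    forall a : outs,
      \sum_(b : outs | [forall j, (j != i) ==> (b j == a j)]) p b x =
      \sum_(b : outs | [forall j, (j != i) ==> (b j == a j)]) p b x'.

Definition allowed_state (p : outs -> ins -> R) : Prop :=
  [/\ nonneg_state p, normalized p & no_signalling p].

End Box.

From HB Require Import structures.
From mathcomp Require Import all_boot all_order all_algebra.
Set Implicit Arguments. Unset Strict Implicit. Unset Printing Implicit Defensive.
Import Order.TTheory GRing.Theory Num.Theory.
Local Open Scope ring_scope.

(* The witness is always a deterministic state p(b|x) = [b = c x], which is
   allowed as soon as changing the input of box i can only change the output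
   of box i. If a1 <> a2, a constant response c = a2 works. If a1 = a2 then
   x1 and x2 differ at some box i; let box i output a1 i on input x2 i and
   some other value (there are at least two outputs) on any other input,
   while every other box outputs a1. *)

Lemma sum_indicator (R : pzSemiRingType) (T : finType) (P : pred T) (c : T) :
  \sum_(b | P b) ((b == c)%:R : R) = (P c)%:R.
Proof.
rewrite big_mkcond (bigD1 c) //= eqxx big1 ?addr0; first by case: (P c).
by move=> b /negbTE ->; case: (P b).
Qed.

Lemma exists_neq_of_card_gt1 (T : finType) (y : T) :
  (1 < #|T|)%N -> exists z : T, z != y.
Proof.
case/card_gt1P=> z [w [_ _ nzw]].
by case: (eqVneq z y) => [ezy | nzy]; [exists w; rewrite -ezy eq_sym | exists z].
Qed.

Lemma exists_ffun_neq (I : finType) (T : I -> eqType)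
    (f g : {dffun forall i, T i}) :
  f != g -> exists i, f i != g i.
Proof.
move=> nfg; apply/existsP; apply: contraNT nfg; rewrite negb_exists => /forallP h.
by apply/eqP/ffunP => i; apply/eqP; move: (h i); rewrite negbK.
Qed.

Section DeterministicStates.
Variables (R : realFieldType) (n : nat) (A X : 'I_n -> finType).

Definition det_state (c : ins X -> outs A) (b : outs A) (x : ins X) : R :=
  (b == c x)%:R.

Definition local_response (c : ins X -> outs A) : Prop :=
  forall (i : 'I_n) (x x' : ins X), (forall j, j != i -> x j = x' j) ->
  forall j, j != i -> c x j = c x' j.

Lemma det_state_allowed c : local_response c -> allowed_state (det_state c).
Proof.
move=> loc_c; split.
- by move=> b x; exact: ler0n.
- by move=> x; rewrite /det_state -[RHS]/((predT (c x))%:R) sum_indicator.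
- move=> i x x' xx' a; rewrite !sum_indicator; congr (nat_of_bool _)%:R.
  apply: eq_forallb => j; case: (eqVneq j i) => //= nji.
  by rewrite (loc_c i x x' xx' j nji).
Qed.

Lemma const_local_response (a : outs A) : local_response (fun=> a).
Proof. by []. Qed.

Definition replace_output (a : outs A) (i : 'I_n) (y : A i) : outs A :=
  [ffun j => dfwith (fun k => a k) y j].

Lemma replace_output_at a i (y : A i) : replace_output a y i = y.
Proof. by rewrite ffunE dfwith_in. Qed.

Lemma replace_output_off a i (y : A i) j : j != i -> replace_output a y j = a j.
Proof. by move=> nji; rewrite ffunE dfwith_out // eq_sym. Qed.

Definition switch_response (i : 'I_n) (v : X i) (a : outs A) (y : A i)
    (x : ins X) : outs A :=
  if x i == v then a else replace_output a y.

Lemma switch_local_response i (v : X i) (a : outs A) (y : A i) :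
  local_response (switch_response v a y).
Proof.
move=> k x x' xx' j njk; rewrite /switch_response.
case: (eqVneq k i) => [eki | nki]; last by rewrite xx' // eq_sym.
rewrite eki in njk.
by case: (x i == v); case: (x' i == v); rewrite ?replace_output_off.
Qed.

Lemma switch_response_off i (v : X i) (a : outs A) (y : A i) (x : ins X) :
  x i != v -> y != a i -> switch_response v a y x != a.
Proof.
rewrite /switch_response => /negbTE -> nya; apply: contraNneq nya => e.
by rewrite -[in a i]e replace_output_at.
Qed.

End DeterministicStates.

Theorem lemma8 (R : realFieldType) (n : nat) (A X : 'I_n -> finType)
    (hA : forall i : 'I_n, (1 < #|A i|)%N)
    (a1 a2 : outs A) (x1 x2 : ins X)
    (hneq : ~ (a1 = a2 /\ x1 = x2)) :
  exists p : outs A -> ins X -> R,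
    allowed_state p /\ p a1 x1 = 0 /\ 0 < p a2 x2.
Proof.
case: (eqVneq a1 a2) hneq => [<- hneq | na12 _].
- have [i nxi] : exists i, x1 i != x2 i.
    by apply: exists_ffun_neq; apply/eqP => ex; apply: hneq.
  have [y nya] := exists_neq_of_card_gt1 (a1 i) (hA i).
  exists (det_state R (switch_response (x2 i) a1 y)); split; last split.
  + exact/det_state_allowed/switch_local_response.
  + by rewrite /det_state eq_sym (negbTE (switch_response_off nxi nya)).
  + by rewrite /det_state /switch_response !eqxx ltr01.
- exists (det_state R (fun=> a2)); split; last split.
  + exact/det_state_allowed/const_local_response.
  + by rewrite /det_state (negbTE na12).
  + by rewrite /det_state eqxx ltr01.
Qed.
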